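(* Let $A$ be a finite set, $n\ge3$, $\rho\subseteq A^n$ with $1\overset{\rho}{\sim}2$, and let $(a_1,\dots,a_n)\in A^n\setminus\rho$ and $b_1,\dots,b_n\in A$ with $b_i\neq a_i$ for all $i$, such that $$(\{a_1,b_1\}\times\dots\times\{a_n,b_n\})\setminus\{(a_1,a_2,a_3,\dots,a_n),(b_1,b_2,a_3,\dots,a_n)\}\subseteq\rho.$$ Then $\rho$ is a key relation and $(a_1,\dots,a_n)$ is a key tuple for $\rho$.
   Context: A unary vector-function is a tuple $\Psi=(\psi_1,\dots,\psi_n)$ of maps $\psi_i:A\to A$ acting coordinatewise; it preserves $\rho$ if $\Psi(\rho)\subseteq\rho$. $\rho\subseteq A^n$ is a key relation if there is $\beta\in A^n\setminus\rho$ (a key tuple) such that every $\alpha\in A^n\setminus\rho$ is mapped to $\beta$ by some unary vector-function preserving $\rho$. The relation $\overset{\rho}{\sim}$: for $i\ne j$, $i\overset{\rho}{\sim}j$ iff there do NOT exist $c_1,\dots,c_n,d_i,d_j\in A$ with $(c_1,\dots,c_n)\notin\rho$ while the tuples obtained by replacing $c_i$ by $d_i$, replacing $c_j$ by $d_j$, and replacing both, all lie in $\rho$. *)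

(* Tuples in A^n are finite functions 'I_n -> A (0-based indices). *)
From mathcomp Require Import all_boot.
Set Implicit Arguments. Unset Strict Implicit. Unset Printing Implicit Defensive.

Section KeyDefs.
Variables (A : finType) (n : nat).
Notation tup := {ffun 'I_n -> A}.

Definition vapply (Psi : 'I_n -> A -> A) (x : tup) : tup :=
  [ffun i => Psi i (x i)].

Definition preserves (Psi : 'I_n -> A -> A) (rho : {set tup}) : Prop :=
  forall x, x \in rho -> vapply Psi x \in rho.

Definition is_key_tuple (rho : {set tup}) (beta : tup) : Prop :=
  beta \notin rho /\
  forall alpha, alpha \notin rho ->
    exists Psi : 'I_n -> A -> A, preserves Psi rho /\ vapply Psi alpha = beta.

Definition is_key_relation (rho : {set tup}) : Prop :=
  exists beta, is_key_tuple rho beta.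

Definition upd (x : tup) (i : 'I_n) (d : A) : tup :=
  [ffun k => if k == i then d else x k].

Definition rho_sim (rho : {set tup}) (i j : 'I_n) : Prop :=
  i != j /\
  ~ (exists (c : tup) (di dj : A),
        c \notin rho /\ upd c i di \in rho /\ upd c j dj \in rho /\
        upd (upd c i di) j dj \in rho).
End KeyDefs.

From mathcomp Require Import all_boot.

(* Fix a tuple alpha outside rho and look at the slice of tuples that agree with
   alpha off the coordinates i, j.  The vector-function sends coordinate i of x to
   b_i iff x_i is "related" to alpha_j in that slice, coordinate j of x to b_j iff
   x_j is related to some u unrelated to alpha_j, and every other coordinate to
   a_k or b_k according as it agrees with alpha or not.  It maps alpha to a and
   every tuple of rho into the box minus the two excluded tuples: landing on a is
   impossible for x in rho, and landing on the other excluded tuple would violate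
   the rectangle rule that i ~rho j imposes on the slice. *)

Set Implicit Arguments.
Unset Strict Implicit.
Unset Printing Implicit Defensive.

Section Upd.
Variables (A : finType) (n : nat).
Implicit Types (x y : {ffun 'I_n -> A}) (i j : 'I_n).

Lemma upd_upd x i d e : upd (upd x i d) i e = upd x i e.
Proof. by apply/ffunP => k; rewrite !ffunE; case: eqP. Qed.

Lemma updC x i j d e :
  i != j -> upd (upd x i d) j e = upd (upd x j e) i d.
Proof.
move=> nij; apply/ffunP => k; rewrite !ffunE.
by case: (eqVneq k i) => [->|//]; rewrite (negbTE nij).
Qed.

Lemma eq_upd2 x y i j :
  (forall k, k != i -> k != j -> x k = y k) -> x = upd (upd y i (x i)) j (x j).
Proof.
move=> xy; apply/ffunP => k; rewrite !ffunE.
case: (eqVneq k j) => [->//|nkj]; case: (eqVneq k i) => [->//|nki].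
exact: xy.
Qed.

Lemma rho_sim_rectangle (rho : {set {ffun 'I_n -> A}}) i j x c1 c2 d1 d2 :
  rho_sim rho i j ->
  upd (upd x i d1) j c2 \in rho -> upd (upd x i c1) j d2 \in rho ->
  upd (upd x i d1) j d2 \in rho -> upd (upd x i c1) j c2 \in rho.
Proof.
move=> [nij noSquare] R12 R21 R22; apply/negPn/negP => R11.
apply: noSquare; exists (upd (upd x i c1) j c2), d1, d2.
have upd_i : upd (upd (upd x i c1) j c2) i d1 = upd (upd x i d1) j c2.
  by rewrite -updC // upd_upd.
by rewrite upd_i !upd_upd.
Qed.

End Upd.

Section KeyTuple.
Variables (A : finType) (n : nat) (rho : {set {ffun 'I_n -> A}}) (i j : 'I_n).
Variables (a b alpha : {ffun 'I_n -> A}).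
Hypotheses (hsim : rho_sim rho i j) (hab : forall k, b k != a k).
Hypothesis alpha_notin : alpha \notin rho.
Implicit Types x : {ffun 'I_n -> A}.

Let nij : i != j := hsim.1.

Definition on_slice (u v : A) : bool := upd (upd alpha i u) j v \in rho.

Definition key_map (k : 'I_n) (d : A) : A :=
  if k == i then (if on_slice d (alpha j) then b k else a k)
  else if k == j then
    (if [exists u, on_slice u d && ~~ on_slice u (alpha j)] then b k else a k)
  else if d == alpha k then a k else b k.

Lemma ab_eq_a (c : bool) k : (if c then b k else a k) = a k -> ~~ c.
Proof. by case: c => //; move/eqP; rewrite (negbTE (hab k)). Qed.

Lemma ab_eq_b (c : bool) k : (if c then b k else a k) = b k -> c.
Proof. by case: c => //; move/eqP; rewrite eq_sym (negbTE (hab k)). Qed.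

Lemma key_map_alpha : vapply key_map alpha = a.
Proof.
have alpha_off : ~~ on_slice (alpha i) (alpha j).
  by rewrite /on_slice -(eq_upd2 (y := alpha)).
apply/ffunP => k; rewrite ffunE /key_map.
case: eqP => [->|_]; first by rewrite (negbTE alpha_off).
case: eqP => [->|_]; last by rewrite eqxx.
by case: existsP => // -[u /andP[/[swap] /negP]].
Qed.

Lemma key_map_box x k : key_map k (x k) = a k \/ key_map k (x k) = b k.
Proof. by rewrite /key_map; do !case: ifP => _; auto. Qed.

Lemma key_map_slice x :
  (forall k, k != i -> k != j -> key_map k (x k) = a k) ->
  x \in rho -> on_slice (x i) (x j).
Proof.
move=> off_a xrho; rewrite /on_slice -eq_upd2 // => k ki kj.
move: (off_a k ki kj); rewrite /key_map (negbTE ki) (negbTE kj).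
by case: eqP => // _ /eqP; rewrite (negbTE (hab k)).
Qed.

Lemma key_map_neq_a x : x \in rho -> vapply key_map x <> a.
Proof.
move=> xrho xa; have at_k k : key_map k (x k) = a k by rewrite -xa ffunE.
have xR := key_map_slice (fun k _ _ => at_k k) xrho.
move: (at_k i) (at_k j); rewrite /key_map eqxx eq_sym (negbTE nij) eqxx.
move=> /ab_eq_a xi_off /ab_eq_a /existsPn /(_ (x i)).
by rewrite xR xi_off.
Qed.

Lemma key_map_neq_ab x :
  x \in rho -> vapply key_map x <> upd (upd a i (b i)) j (b j).
Proof.
move=> xrho xab.
have at_k k : key_map k (x k) = upd (upd a i (b i)) j (b j) k by rewrite -xab ffunE.
have xR : on_slice (x i) (x j).
  apply: key_map_slice xrho => k ki kj.
  by rewrite at_k !ffunE (negbTE ki) (negbTE kj).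
have nji : j != i by rewrite eq_sym.
move: (at_k i) (at_k j); rewrite /key_map !ffunE !eqxx (negbTE nij) (negbTE nji).
move=> /ab_eq_b xi_on /ab_eq_b /existsP [u /andP[uR /negP]]; apply.
exact: rho_sim_rectangle hsim xi_on uR xR.
Qed.

End KeyTuple.

Lemma key_tuple_of_box (A : finType) (n : nat) (rho : {set {ffun 'I_n -> A}})
    (i j : 'I_n) (a b : {ffun 'I_n -> A}) :
  rho_sim rho i j -> a \notin rho -> (forall k, b k != a k) ->
  (forall x : {ffun 'I_n -> A},
     (forall k, x k = a k \/ x k = b k) -> x <> a ->
     x <> upd (upd a i (b i)) j (b j) -> x \in rho) ->
  is_key_tuple rho a.
Proof.
move=> hsim ha hab hbox; split=> // alpha alpha_notin.
exists (key_map rho i j a b alpha); split; last exact: key_map_alpha.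
move=> x xrho; apply: hbox.
- by move=> k; rewrite ffunE; apply: key_map_box.
- exact: key_map_neq_a.
- exact: key_map_neq_ab.
Qed.

Theorem mainTheorem8 (A : finType) (n : nat) (hn : 3 <= n)
  (rho : {set {ffun 'I_n -> A}}) (i1 i2 : 'I_n)
  (hi1 : nat_of_ord i1 = 0) (hi2 : nat_of_ord i2 = 1)
  (hsim : rho_sim rho i1 i2)
  (a b : {ffun 'I_n -> A}) (ha : a \notin rho)
  (hab : forall i, b i != a i)
  (hbox : forall x : {ffun 'I_n -> A},
      (forall i, x i = a i \/ x i = b i) ->
      x <> a ->
      x <> [ffun i => if (nat_of_ord i < 2) then b i else a i] ->
      x \in rho) :
  is_key_relation rho /\ is_key_tuple rho a.
Proof.
have excluded : [ffun k => if (nat_of_ord k < 2) then b k else a k]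
                = upd (upd a i1 (b i1)) i2 (b i2).
  apply/ffunP => k; rewrite !ffunE.
  case: (eqVneq k i2) => [->|k2]; first by rewrite hi2.
  case: (eqVneq k i1) => [->|k1]; first by rewrite hi1.
  by move: k1 k2; rewrite -!(inj_eq val_inj) /= hi1 hi2; case: k => -[|[|k]].
have key : is_key_tuple rho a.
  by apply: key_tuple_of_box hsim ha hab _; rewrite -excluded.
by split=> //; exists a.
Qed.
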